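(* Let $R$ be a nonzero ring and $*\in\{l,r,\emptyset\}$. Then the set $\mathbb{L}_*(R)$ has maximal elements with respect to inclusion, i.e. $\max\mathbb{L}_*(R)\neq\emptyset$.
   Context: Rings are associative with $1$. A multiplicative set $S\subseteq R$: $SS\subseteq S$, $1\in S$, $0\notin S$. $R\langle S^{-1}\rangle=R\langle X_S\rangle/I_S$, where $R\langle X_S\rangle$ is freely generated by $R$ and noncommuting indeterminates $x_s$ ($s\in S$) and $I_S$ is generated by $sx_s-1,x_ss-1$. $S$ is left localizable if $R\langle S^{-1}\rangle\ne0$ and every element is of the form $(x_s+I_S)(r+I_S)$; right localizable if $R\langle S^{-1}\rangle\ne0$ and every element is of the form $(r+I_S)(x_s+I_S)$ ($s\in S,r\in R$); localizable if both. $\mathbb{L}_l(R)$, $\mathbb{L}_r(R)$, $\mathbb{L}_\emptyset(R)$ are the sets of left localizable, right localizable, localizable sets. *)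

From mathcomp Require Import all_boot all_algebra.
Set Implicit Arguments. Unset Strict Implicit. Unset Printing Implicit Defensive.
Import GRing.Theory.
Local Open Scope ring_scope.

Definition mult_set (R : nzRingType) (S : R -> Prop) : Prop :=
  [/\ forall a b, S a -> S b -> S (a * b), S 1 & ~ S 0].

(* Terms of the ring R<X_S> freely generated by R and noncommuting
   indeterminates x_s (s ∈ S). *)
Inductive lexpr (R : nzRingType) (S : R -> Prop) : Type :=
| LConst of R
| LVar of {s : R | S s}
| LZero | LOne
| LAdd of lexpr S & lexpr S
| LNeg of lexpr S
| LMul of lexpr S & lexpr S.

Arguments LZero {R S}. Arguments LOne {R S}.

(* The congruence presenting R<S^{-1}> = R<X_S>/I_S : ring axioms, the ring
   structure of R (constants), and the relations s x_s = 1, x_s s = 1. *)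
Inductive leq_rel (R : nzRingType) (S : R -> Prop) : lexpr S -> lexpr S -> Prop :=
| lr_refl e : leq_rel e e
| lr_sym e f : leq_rel e f -> leq_rel f e
| lr_trans e f g : leq_rel e f -> leq_rel f g -> leq_rel e g
| lr_add e e' f f' : leq_rel e e' -> leq_rel f f' -> leq_rel (LAdd e f) (LAdd e' f')
| lr_neg e e' : leq_rel e e' -> leq_rel (LNeg e) (LNeg e')
| lr_mul e e' f f' : leq_rel e e' -> leq_rel f f' -> leq_rel (LMul e f) (LMul e' f')
| lr_addA e f g : leq_rel (LAdd e (LAdd f g)) (LAdd (LAdd e f) g)
| lr_addC e f : leq_rel (LAdd e f) (LAdd f e)
| lr_add0 e : leq_rel (LAdd LZero e) e
| lr_addN e : leq_rel (LAdd (LNeg e) e) LZero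
| lr_mulA e f g : leq_rel (LMul e (LMul f g)) (LMul (LMul e f) g)
| lr_mul1l e : leq_rel (LMul LOne e) e
| lr_mul1r e : leq_rel (LMul e LOne) e
| lr_mulDl e f g : leq_rel (LMul (LAdd e f) g) (LAdd (LMul e g) (LMul f g))
| lr_mulDr e f g : leq_rel (LMul e (LAdd f g)) (LAdd (LMul e f) (LMul e g))
| lr_cadd a b : leq_rel (LConst S (a + b)) (LAdd (LConst S a) (LConst S b))
| lr_cneg a : leq_rel (LConst S (- a)) (LNeg (LConst S a))
| lr_cmul a b : leq_rel (LConst S (a * b)) (LMul (LConst S a) (LConst S b))
| lr_c0 : leq_rel (LConst S 0) LZero
| lr_c1 : leq_rel (LConst S 1) LOne
| lr_invr (s : {s : R | S s}) : leq_rel (LMul (LConst S (sval s)) (LVar s)) LOne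
| lr_invl (s : {s : R | S s}) : leq_rel (LMul (LVar s) (LConst S (sval s))) LOne.

Definition loc_nonzero (R : nzRingType) (S : R -> Prop) : Prop :=
  ~ leq_rel (@LOne R S) LZero.

Definition left_localizable (R : nzRingType) (S : R -> Prop) : Prop :=
  mult_set S /\ loc_nonzero S /\
  forall e : lexpr S, exists (s : {s : R | S s}) (r : R),
    leq_rel e (LMul (LVar s) (LConst S r)).

Definition right_localizable (R : nzRingType) (S : R -> Prop) : Prop :=
  mult_set S /\ loc_nonzero S /\
  forall e : lexpr S, exists (s : {s : R | S s}) (r : R),
    leq_rel e (LMul (LConst S r) (LVar s)).

Inductive loc_kind := LK_left | LK_right | LK_both.

Definition localizable_of (k : loc_kind) (R : nzRingType) (S : R -> Prop) : Prop :=
  match k with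
  | LK_left => left_localizable S
  | LK_right => right_localizable S
  | LK_both => left_localizable S /\ right_localizable S
  end.

(* Zorn's lemma, applied to the localizable sets ordered by inclusion.  A
   derivation in R<U^{-1}> involves only finitely many inverted elements,
   so when U is the union of a nonempty chain, every term of R<U^{-1}> and
   every derivation between such terms already lives in R<X^{-1}> for some
   member X of the chain; hence the union of a chain of (left, right)
   localizable sets is again (left, right) localizable.  The set {1} is
   localizable in every nonzero ring, so it bounds the empty chain. *)
From mathcomp Require Import all_boot all_algebra.
From mathcomp Require Import boolp classical_sets.
Set Implicit Arguments. Unset Strict Implicit.
Import GRing.Theory.
Local Open Scope classical_set_scope.
Local Open Scope ring_scope.

Section Lift.
Variable R : nzRingType.

Fixpoint lift (X Y : set R) (sXY : X `<=` Y) (e : lexpr X) : lexpr Y :=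
  match e with
  | LConst a => LConst Y a
  | LVar s => LVar (exist Y (sval s) (sXY _ (svalP s)))
  | LZero => LZero
  | LOne => LOne
  | LAdd a b => LAdd (lift sXY a) (lift sXY b)
  | LNeg a => LNeg (lift sXY a)
  | LMul a b => LMul (lift sXY a) (lift sXY b)
  end.

Lemma lift_rel (X Y : set R) (sXY : X `<=` Y) e f :
  leq_rel e f -> leq_rel (lift sXY e) (lift sXY f).
Proof.
elim=> /=; try by intros; econstructor; eauto.
- by move=> s; apply: (lr_invr (exist Y (sval s) (sXY _ (svalP s)))).
- by move=> s; apply: (lr_invl (exist Y (sval s) (sXY _ (svalP s)))).
Qed.

(* Variables x_s with s outside Y are sent to the junk value 0; restr is only
   used for Y large enough to contain every s occurring in e. *)
Fixpoint restr (X Y : set R) (e : lexpr X) : lexpr Y :=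
  match e with
  | LConst a => LConst Y a
  | LVar s => if pselect (Y (sval s)) is left Ys then LVar (exist Y _ Ys)
              else LZero
  | LZero => LZero
  | LOne => LOne
  | LAdd a b => LAdd (restr Y a) (restr Y b)
  | LNeg a => LNeg (restr Y a)
  | LMul a b => LMul (restr Y a) (restr Y b)
  end.

End Lift.

Section ChainUnion.
Variables (R : nzRingType) (F : set (set R)).
Hypotheses (F_neq0 : F !=set0) (F_chain : total_on F subset).
Let U := \bigcup_(X in F) X.

Lemma sub_chain_union X : F X -> X `<=` U.
Proof. by move=> FX x Xx; exists X. Qed.

Definition chain_eventually (P : set (set R)) :=
  exists2 X, F X & forall Y, F Y -> X `<=` Y -> P Y.

Lemma chain_eventuallyT (P : set (set R)) :
  (forall Y, P Y) -> chain_eventually P.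
Proof. by move=> PT; case: F_neq0 => X FX; exists X. Qed.

Lemma chain_eventually_mono (P Q : set (set R)) :
  P `<=` Q -> chain_eventually P -> chain_eventually Q.
Proof. by move=> PQ [X FX PX]; exists X => // Y FY sXY; apply/PQ/PX. Qed.

Lemma chain_eventuallyI (P Q : set (set R)) :
  chain_eventually P -> chain_eventually Q -> chain_eventually (P `&` Q).
Proof.
move=> [X FX PX] [X' FX' QX'].
have [sXX'|sX'X] := F_chain FX FX'.
- by exists X' => // Y FY sX'Y; split; [apply: PX => // x /sXX'/sX'Y | apply: QX'].
- by exists X => // Y FY sXY; split; [apply: PX | apply: QX' => // x /sX'X/sXY].
Qed.

Lemma chain_eventually_mem x : U x -> chain_eventually (fun Y => Y x).
Proof. by case=> X FX Xx; exists X => // Y _; apply. Qed.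

Lemma restr_rel (e f : lexpr U) : leq_rel e f ->
  chain_eventually (fun Y => leq_rel (restr Y e) (restr Y f)).
Proof.
elim=> /=; try by intros; apply: chain_eventuallyT => Y; constructor.
- by move=> ? ? _ ev; apply: chain_eventually_mono ev => Y; apply: lr_sym.
- move=> ? ? ? _ ev1 _ ev2; apply: chain_eventually_mono (chain_eventuallyI ev1 ev2).
  by move=> Y []; apply: lr_trans.
- move=> ? ? ? ? _ ev1 _ ev2; apply: chain_eventually_mono (chain_eventuallyI ev1 ev2).
  by move=> Y []; apply: lr_add.
- by move=> ? ? _ ev; apply: chain_eventually_mono ev => Y; apply: lr_neg.
- move=> ? ? ? ? _ ev1 _ ev2; apply: chain_eventually_mono (chain_eventuallyI ev1 ev2).
  by move=> Y []; apply: lr_mul.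
- move=> s; apply: chain_eventually_mono (chain_eventually_mem (svalP s)) => Y Ys.
  by case: pselect => // {}Ys; apply: (lr_invr (exist Y _ Ys)).
- move=> s; apply: chain_eventually_mono (chain_eventually_mem (svalP s)) => Y Ys.
  by case: pselect => // {}Ys; apply: (lr_invl (exist Y _ Ys)).
Qed.

Lemma lift_restr_eventually (e : lexpr U) :
  chain_eventually (fun Y => forall FY : F Y, e = lift (sub_chain_union FY) (restr Y e)).
Proof.
elim: e => /=; try by intros; apply: chain_eventuallyT.
- move=> [x Ux]; apply: chain_eventually_mono (chain_eventually_mem Ux) => Y Yx FY /=.
  by case: pselect => // Yx' /=; congr (LVar (exist _ _ _)); apply: Prop_irrelevance.
- move=> a eva b evb; apply: chain_eventually_mono (chain_eventuallyI eva evb).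
  by move=> Y [ea eb] FY; rewrite -ea -eb.
- by move=> a eva; apply: chain_eventually_mono eva => Y ea FY; rewrite -ea.
- move=> a eva b evb; apply: chain_eventually_mono (chain_eventuallyI eva evb).
  by move=> Y [ea eb] FY; rewrite -ea -eb.
Qed.

Lemma lexpr_chain_union (e : lexpr U) :
  exists X (FX : F X) (e' : lexpr X), e = lift (sub_chain_union FX) e'.
Proof.
have [X FX eX] := lift_restr_eventually e.
by exists X, FX, (restr X e); apply: eX.
Qed.

Lemma loc_nonzero_chain_union :
  (forall X, F X -> loc_nonzero X) -> loc_nonzero U.
Proof. by move=> F_nonzero /restr_rel[X FX eX]; apply: (F_nonzero _ FX); apply: eX. Qed.

Lemma mult_set_chain_union : (forall X, F X -> mult_set X) -> mult_set U.
Proof.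
move=> F_mult; split.
- move=> a b [X FX Xa] [Y FY Yb].
  have [sXY|sYX] := F_chain FX FY.
  + by exists Y => //; case: (F_mult _ FY) => mulY _ _; apply/mulY/Yb/sXY.
  + by exists X => //; case: (F_mult _ FX) => mulX _ _; apply/mulX/sYX.
- by case: F_neq0 => X FX; exists X => //; case: (F_mult _ FX).
- by case=> X FX; case: (F_mult _ FX).
Qed.

Lemma left_localizable_chain_union :
  (forall X, F X -> left_localizable X) -> left_localizable U.
Proof.
move=> F_left; split; first by apply: mult_set_chain_union => X /F_left[].
split; first by apply: loc_nonzero_chain_union => X /F_left[_ []].
move=> e; have [X [FX [e' ->]]] := lexpr_chain_union e.
have [_ [_ /(_ e')[s [r e's]]]] := F_left X FX.
by exists (exist U _ (sub_chain_union FX (svalP s))), r; apply: lift_rel e's.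
Qed.

Lemma right_localizable_chain_union :
  (forall X, F X -> right_localizable X) -> right_localizable U.
Proof.
move=> F_right; split; first by apply: mult_set_chain_union => X /F_right[].
split; first by apply: loc_nonzero_chain_union => X /F_right[_ []].
move=> e; have [X [FX [e' ->]]] := lexpr_chain_union e.
have [_ [_ /(_ e')[s [r e's]]]] := F_right X FX.
by exists (exist U _ (sub_chain_union FX (svalP s))), r; apply: lift_rel e's.
Qed.

End ChainUnion.

Lemma localizable_chain_union (R : nzRingType) (k : loc_kind) (F : set (set R)) :
  F !=set0 -> total_on F subset -> (forall X, F X -> localizable_of k X) ->
  localizable_of k (\bigcup_(X in F) X).
Proof.
move=> F_neq0 F_chain; case: k => /= F_loc.
- exact: left_localizable_chain_union.
- exact: right_localizable_chain_union.
- by split; [apply: left_localizable_chain_union | apply: right_localizable_chain_union]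
     => // X /F_loc[].
Qed.

Section UnitSet.
Variable R : nzRingType.
Let one := [set (1 : R)].

Fixpoint lexpr_eval (e : lexpr one) : R :=
  match e with
  | LConst a => a
  | LVar _ => 1
  | LZero => 0
  | LOne => 1
  | LAdd a b => lexpr_eval a + lexpr_eval b
  | LNeg a => - lexpr_eval a
  | LMul a b => lexpr_eval a * lexpr_eval b
  end.

Lemma lexpr_eval_rel e f : leq_rel e f -> lexpr_eval e = lexpr_eval f.
Proof.
elim=> //=; try by move=> *; congruence.
all: try by case=> _ /= ->; rewrite mulr1.
all: try by move=> *; rewrite addrC.
all: by move=> *; rewrite ?(addrA, add0r, addNr, mulrA, mul1r, mulr1, mulrDl, mulrDr).
Qed.

Lemma loc_nonzero_set1 : loc_nonzero one.
Proof. by move/lexpr_eval_rel => /= /eqP; rewrite oner_eq0. Qed.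

Lemma mult_set_set1 : mult_set one.
Proof.
split=> [a b -> ->|//|]; first by rewrite mulr1.
by move/eqP; rewrite eq_sym oner_eq0.
Qed.

Lemma var_set1_rel (s : {s | one s}) : leq_rel (LVar s) LOne.
Proof.
case: s => x Ex; have x1 : x = 1 := Ex; subst x.
apply: lr_trans (lr_sym (lr_mul1l _)) _.
apply: lr_trans (lr_mul (lr_sym (lr_c1 _)) (lr_refl _)) _.
exact: (lr_invr (exist one 1 Ex)).
Qed.

Lemma lexpr_eval_const e : leq_rel e (LConst one (lexpr_eval e)).
Proof.
elim: e => /= [a|s|||a ea b eb|a ea|a ea b eb].
- exact: lr_refl.
- exact: lr_trans (var_set1_rel s) (lr_sym (lr_c1 _)).
- exact: lr_sym (lr_c0 _).
- exact: lr_sym (lr_c1 _).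
- exact: lr_trans (lr_add ea eb) (lr_sym (lr_cadd _ _ _)).
- exact: lr_trans (lr_neg ea) (lr_sym (lr_cneg _ _)).
- exact: lr_trans (lr_mul ea eb) (lr_sym (lr_cmul _ _ _)).
Qed.

Let one1 : {s | one s} := exist one 1 erefl.

Lemma left_localizable_set1 : left_localizable one.
Proof.
split; first exact: mult_set_set1.
split=> [|e]; first exact: loc_nonzero_set1.
exists one1, (lexpr_eval e); apply: lr_trans (lexpr_eval_const e) _.
apply: lr_trans (lr_sym (lr_mul1l _)) _.
exact: lr_mul (lr_sym (var_set1_rel one1)) (lr_refl _).
Qed.

Lemma right_localizable_set1 : right_localizable one.
Proof.
split; first exact: mult_set_set1.
split=> [|e]; first exact: loc_nonzero_set1.
exists one1, (lexpr_eval e); apply: lr_trans (lexpr_eval_const e) _.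
apply: lr_trans (lr_sym (lr_mul1r _)) _.
exact: lr_mul (lr_refl _) (lr_sym (var_set1_rel one1)).
Qed.

End UnitSet.

Lemma localizable_set1 (R : nzRingType) (k : loc_kind) :
  localizable_of k [set (1 : R)].
Proof.
case: k => /=; first exact: left_localizable_set1; first exact: right_localizable_set1.
by split; [apply: left_localizable_set1 | apply: right_localizable_set1].
Qed.

Theorem theorem1p9 (R : nzRingType) (k : loc_kind) :
  exists S : R -> Prop,
    localizable_of k S /\
    (forall T : R -> Prop, localizable_of k T ->
       (forall x, S x -> T x) -> forall x, T x -> S x).
Proof.
pose Loc := {X : set R | localizable_of k X}.
pose incl (X Y : Loc) := `[< sval X `<=` sval Y >].
have chain_bounded (A : set Loc) : total_on A incl ->
    exists Y, forall X, A X -> incl X Y.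
  move=> A_chain; have [A_neq0|A_eq0] := pselect (A !=set0); last first.
    by exists (exist _ _ (localizable_set1 R k)) => X AX; case: A_eq0; exists X.
  pose F := [set sval X | X in A].
  have F_chain : total_on F subset.
    move=> _ _ [X AX <-] [Y AY <-].
    by case: (A_chain X Y AX AY) => /asboolP; [left | right].
  have F_loc X : F X -> localizable_of k X by case=> Y _ <-; apply: svalP.
  have F_neq0 : F !=set0 by case: A_neq0 => X AX; exists (sval X), X.
  exists (exist _ _ (localizable_chain_union F_neq0 F_chain F_loc)) => X AX.
  by apply/asboolP/sub_chain_union; exists X.
have [|||[S S_loc] S_max] := @ZL_preorder Loc (exist _ _ (localizable_set1 R k)) incl.
- by move=> X; apply/asboolP.
- by move=> X Y Z /asboolP sXY /asboolP sYZ; apply/asboolP => x /sXY/sYZ.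
- exact: chain_bounded.
exists S; split=> // T T_loc sST.
by apply/asboolP/(S_max (exist _ T T_loc))/asboolP.
Qed.
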